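(* Let $k\ge1$ and let $\Sigma_k=\{(f,g)\in P_k\times P_k: f\le g\}$. Define $r(f,g)=(f,f)$, $s(f,g)=(g,g)$, $(f,g)(g,h)=(f,h)$, and $d(f,g)=h(g)-h(f)$. Then $d$ takes values in $\mathbb{N}^k$, and with these structure maps $(\Sigma_k,d)$ is a $k$-graph; moreover $d$ maps $\Sigma_k$ onto $\{n\in\mathbb{N}^k: n\le\mathbf{1}_k\}$.
   Context: A function $f:\{0,\dots,k\}\to\{0,\dots,k\}$ is a $k$-placing if $f(j)=|\{i: f(i)<f(j)\}|$ for all $j\le k$; $P_k$ is the set of $k$-placings, ordered by $f\le g$ iff $f(i)\le g(i)$ for all $i$. The height function $h:P_k\to\mathbb{N}^k$ is given by $h(f)_i=1$ if $f^{-1}(i)\neq\emptyset$ and $h(f)_i=0$ otherwise, for $1\le i\le k$. $\mathbf{1}_k=(1,\dots,1)\in\mathbb{N}^k$. A $k$-graph is a countable small category with a functor $d$ to $\mathbb{N}^k$ such that, writing $\Lambda^n=d^{-1}(n)$, composition is a bijection from composable pairs in $\Lambda^m\times\Lambda^n$ onto $\Lambda^{m+n}$. *)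

From HB Require Import structures.
From mathcomp Require Import all_boot all_order all_algebra.
Set Implicit Arguments. Unset Strict Implicit. Unset Printing Implicit Defensive.

(** The carrier [A] is a
    countable type of morphisms; objects are identified with identity
    morphisms ([r x], [s x] are the identities at the range and source of x).
    [comp x y] is the composite "x y" (defined when [s x = r y]; junk otherwise). *)

Definition addv (k : nat) (m n : {ffun 'I_k -> nat}) : {ffun 'I_k -> nat} :=
  [ffun i => m i + n i].

Definition zerov (k : nat) : {ffun 'I_k -> nat} := [ffun => 0].

Definition is_kgraph (k : nat) (A : countType) (r s : A -> A)
  (comp : A -> A -> A) (d : A -> {ffun 'I_k -> nat}) : Prop :=
  (forall x, r (r x) = r x /\ s (r x) = r x) /\
  (forall x, r (s x) = s x /\ s (s x) = s x) /\
  (forall x y, s x = r y -> r (comp x y) = r x /\ s (comp x y) = s y) /\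
  (forall x, comp (r x) x = x /\ comp x (s x) = x) /\
  (forall x y z, s x = r y -> s y = r z ->
      comp (comp x y) z = comp x (comp y z)) /\
  (forall x, d (r x) = zerov k) /\
  (forall x y, s x = r y -> d (comp x y) = addv (d x) (d y)) /\
  (forall (m n : {ffun 'I_k -> nat}) (x : A), d x = addv m n ->
      exists! p : A * A,
        [/\ s p.1 = r p.2, d p.1 = m, d p.2 = n & comp p.1 p.2 = x]).

Definition is_placing (k : nat) (f : {ffun 'I_k.+1 -> 'I_k.+1}) : bool :=
  [forall j, (f j : nat) == #|[pred i | (f i < f j)%N]|].

Definition placing (k : nat) := {f : {ffun 'I_k.+1 -> 'I_k.+1} | is_placing f}.

Definition ple (k : nat) (f g : placing k) : bool :=
  [forall i, (val f i <= val g i)%N].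

(** height: h(f)_i = 1 iff i is in the image of f, for 1 <= i <= k;
    coordinate (i : 'I_k) stands for the index i+1. *)
Definition height (k : nat) (f : placing k) : 'I_k -> nat :=
  fun i => nat_of_bool [exists j, (val f j : nat) == i.+1].

Definition Sigma (k : nat) := {p : placing k * placing k | ple p.1 p.2}.

Definition sig_r (k : nat) (x : Sigma k) : Sigma k :=
  insubd x ((val x).1, (val x).1).
Definition sig_s (k : nat) (x : Sigma k) : Sigma k :=
  insubd x ((val x).2, (val x).2).
(* (f,g)(g,h) = (f,h); junk (= x) on non-composable pairs *)
Definition sig_comp (k : nat) (x y : Sigma k) : Sigma k :=
  insubd x ((val x).1, (val y).2).

Definition sig_dZ (k : nat) (x : Sigma k) (i : 'I_k) : int :=
  ((height (val x).2 i)%:Z - (height (val x).1 i)%:Z)%R.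

(* the same difference as an element of N^k (truncated subtraction; it agrees
   with sig_dZ by the first conclusion of the theorem) *)
Definition sig_d (k : nat) (x : Sigma k) : {ffun 'I_k -> nat} :=
  [ffun i => height (val x).2 i - height (val x).1 i].

From Pilot Require Import Defs.
From mathcomp Require Import all_boot all_order all_algebra.
From mathcomp Require Import zify.
Set Implicit Arguments. Unset Strict Implicit. Unset Printing Implicit Defensive.

(* Everything rests on the counting function [below f c = #{i | f i < c}].
   A placing is a fixed point of it on its values, [below f c >= c] always,
   and [below] is antitone in f; hence the image of f grows along <=
   (so degrees are in N^k), and for g <= h a value c of g is a lower bound
   of g j as soon as it is one of h j (a "round-down" property).

   From this, for f <= h a placing g with f <= g <= h is determined by its
   image ([placing_eq_of_image]), and every set of values between the images
   of f and h is the image of such a g, namely g j = the largest admissible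
   value below h j ([factor_placing]).  Heights encode images, so these two
   facts are exactly existence and uniqueness of factorisations in Sigma_k;
   the category axioms are bookkeeping.  Surjectivity onto {n <= 1_k}
   follows by factorising the arrow from the constant placing (height 0) to
   the identity placing (height 1_k) with degrees n and 1_k - n. *)

Lemma card_lt_ord n (j : 'I_n) : #|[pred i : 'I_n | i < j]| = j.
Proof.
have le_jn : j <= n by apply: ltnW.
have inj : injective (widen_ord le_jn) by move=> a b /(congr1 val) /= /val_inj.
rewrite -[RHS](card_ord j) -(card_image inj).
apply: eq_card => i; rewrite inE; apply/idP/imageP.
- by move=> hi; exists (Ordinal hi) => //; apply: val_inj.
- by case=> x _ ->; rewrite /= ltn_ord.
Qed.

Section Placings.
Variable k : nat.
Implicit Types f g h : placing k.

Definition pval f (j : 'I_k.+1) : nat := val f j.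

Definition below f c : nat := #|[pred i | pval f i < c]|.

Definition in_image f c : bool := [exists j, pval f j == c].

Lemma pval_le f j : pval f j <= k.
Proof. by rewrite -ltnS; apply: ltn_ord. Qed.

Lemma placingE f j : pval f j = below f (pval f j).
Proof. by have /forallP/(_ j)/eqP := valP f. Qed.

Lemma ple_pval f g j : ple f g -> pval f j <= pval g j.
Proof. by move/forallP/(_ j). Qed.

Lemma ple_refl f : ple f f.
Proof. by apply/forallP. Qed.

Lemma ple_trans f g h : ple f g -> ple g h -> ple f h.
Proof.
by move=> /forallP le_fg /forallP le_gh; apply/forallP => i; apply: leq_trans.
Qed.

Lemma below_next_value f c :
  (forall i, pval f i < c) \/ exists m, c <= pval f m /\ below f c = pval f m.
Proof.
case: (boolP [exists i, c <= pval f i]) => [/existsP ex|/existsPn nex]; last first.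
  by left=> i; rewrite ltnNge nex.
right.
have exv : exists v, [exists i, (c <= pval f i) && (pval f i == v)].
  by case: ex => i hi; exists (pval f i); apply/existsP; exists i; rewrite hi eqxx.
case: (ex_minnP exv) => v /existsP [m /andP [le_cm /eqP mv]] vmin.
exists m; split => //.
rewrite [RHS]placingE /below; apply: eq_card => i; rewrite !inE.
apply/idP/idP => [hi|]; first exact: leq_trans hi le_cm.
rewrite !ltnNge; apply: contra => le_ci; rewrite mv.
by apply: vmin; apply/existsP; exists i; rewrite le_ci eqxx.
Qed.

Lemma below_all f c : (forall i, pval f i < c) -> below f c = k.+1.
Proof.
move=> all_lt; rewrite /below -[RHS](card_ord k.+1).
by apply: eq_card => i; rewrite !inE all_lt.
Qed.

Lemma below_ge f c : c <= k.+1 -> c <= below f c.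
Proof. by move=> le_ck; case: (below_next_value f c) => [/below_all->|[m [? ->]]]. Qed.

Lemma below_image f c : in_image f c -> below f c = c.
Proof. by case/existsP => j /eqP <-; rewrite -placingE. Qed.

Lemma image_below f c : c <= k -> below f c = c -> in_image f c.
Proof.
move=> le_ck; case: (below_next_value f c) => [/below_all->|[m [_ ->]] <-].
  by move=> ek; move: le_ck; rewrite -ek ltnn.
by apply/existsP; exists m.
Qed.

Lemma image0 f : in_image f 0.
Proof. by apply: image_below => //; apply: eq_card0 => i; rewrite inE. Qed.

Lemma image_le f c : in_image f c -> c <= k.
Proof. by case/existsP => j /eqP <-; apply: pval_le. Qed.

Lemma below_antimono f g c : ple f g -> below g c <= below f c.
Proof.
move=> le_fg; apply: subset_leq_card; apply/subsetP => i; rewrite !inE.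
exact: leq_ltn_trans (ple_pval i le_fg).
Qed.

(* Images grow along the order; this makes degrees nonnegative. *)
Lemma image_mono f g c : ple f g -> in_image f c -> in_image g c.
Proof.
move=> le_fg imf; have le_ck := image_le imf.
apply: image_below => //; apply/eqP; rewrite eqn_leq.
have := below_antimono c le_fg; rewrite (below_image imf) => -> /=.
by apply: below_ge; apply: leq_trans le_ck _.
Qed.

Lemma image_lower g h c j :
  ple g h -> in_image g c -> c <= pval h j -> c <= pval g j.
Proof.
move=> le_gh img le_ch; rewrite leqNgt; apply/negP => lt_gc.
have sub : [pred i | pval h i < c] \subset [pred i | pval g i < c].
  by apply/subsetP => i; rewrite !inE; apply: leq_ltn_trans (ple_pval i le_gh).
have card_eq : #|[pred i | pval h i < c]| = #|[pred i | pval g i < c]|.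
  apply/eqP; rewrite eqn_leq subset_leq_card //=.
  rewrite -[X in X <= _]/(below g c) (below_image img) below_ge //.
  exact: leq_trans (image_le img) _.
have := subset_cardP card_eq sub j; rewrite !inE lt_gc.
by move/idP; rewrite ltnNge le_ch.
Qed.

Lemma placing_eq_of_image g1 g2 h :
  ple g1 h -> ple g2 h -> (forall c, in_image g1 c = in_image g2 c) -> g1 = g2.
Proof.
move=> le1 le2 same; apply: val_inj; apply/ffunP => j; apply: val_inj.
apply/eqP; rewrite -[_ == _]/(pval g1 j == pval g2 j) eqn_leq.
have own g : in_image g (pval g j) by apply/existsP; exists j.
apply/andP; split.
- by apply: (image_lower le2); [rewrite -same | apply: ple_pval].
- by apply: (image_lower le1); [rewrite same | apply: ple_pval].
Qed.

(* Level 0 and levels beyond k are forced, so levels 1..k suffice. *)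
Lemma image_ext g1 g2 : (forall i : 'I_k, in_image g1 i.+1 = in_image g2 i.+1) ->
  forall c, in_image g1 c = in_image g2 c.
Proof.
move=> same [|c]; first by rewrite !image0.
case: (ltnP c k) => [lt_ck|le_kc]; first exact: (same (Ordinal lt_ck)).
have out g : in_image g c.+1 = false.
  by apply: contraTF le_kc => /image_le; rewrite -ltnNge.
by rewrite !out.
Qed.

Section RoundDown.
(* Given h and a set C of levels containing 0 and attained by h, rounding
   each value of h down to C yields a placing with image C. *)
Variables (h : placing k) (C : pred nat).
Hypothesis C0 : C 0.
Hypothesis C_image : forall c, C c -> c <= k -> in_image h c.

Definition round_down (j : 'I_k.+1) : nat :=
  \max_(c in [pred c : 'I_k.+1 | C c && (c <= pval h j)]) c.

Lemma round_down_lt j : round_down j < k.+1.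
Proof. by rewrite ltnS; apply/bigmax_leqP => c _; rewrite -ltnS. Qed.

Lemma round_downP j : C (round_down j) && (round_down j <= pval h j).
Proof.
have : 0 < #|[pred c : 'I_k.+1 | C c && (c <= pval h j)]|.
  by apply/card_gt0P; exists ord0; rewrite inE C0.
by case/(eq_bigmax_cond val) => c; rewrite inE /round_down => ? ->.
Qed.

Lemma round_down_ge c j : C c -> c <= pval h j -> c <= round_down j.
Proof.
move=> Cc le_ch; have lt_ck : c < k.+1 := leq_ltn_trans le_ch (ltn_ord _).
by apply: (@leq_bigmax_cond _ _ val (Ordinal lt_ck)); rewrite inE Cc.
Qed.

Definition round_fun : {ffun 'I_k.+1 -> 'I_k.+1} := [ffun j => inord (round_down j)].

Lemma round_funE j : (round_fun j : nat) = round_down j.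
Proof. by rewrite ffunE inordK // round_down_lt. Qed.

Lemma round_fun_placing : is_placing round_fun.
Proof.
apply/forallP => j; apply/eqP; have /andP [Cj le_jh] := round_downP j.
have imj := C_image Cj (leq_trans le_jh (pval_le h j)).
rewrite round_funE -{1}(below_image imj); apply: eq_card => i; rewrite !inE !round_funE.
apply/idP/idP => [lt_ij|]; first by case/andP: (round_downP i) => _ /leq_ltn_trans->.
by rewrite !ltnNge; apply: contra => /(round_down_ge Cj).
Qed.

Definition rounded : placing k := exist _ round_fun round_fun_placing.

Lemma rounded_pval j : pval rounded j = round_down j.
Proof. exact: round_funE. Qed.

Lemma rounded_le : ple rounded h.
Proof.
apply/forallP => j; rewrite -[_ <= _]/(pval rounded j <= pval h j) rounded_pval.
by case/andP: (round_downP j).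
Qed.

Lemma rounded_image c : c <= k -> in_image rounded c = C c.
Proof.
move=> le_ck; apply/existsP/idP => [[j /eqP <-]|Cc].
  by rewrite rounded_pval; case/andP: (round_downP j).
have /existsP [j /eqP hj] := C_image Cc le_ck.
exists j; rewrite rounded_pval eqn_leq round_down_ge ?hj ?andbT //.
by case/andP: (round_downP j) => _; rewrite hj.
Qed.

End RoundDown.

Lemma factor_placing f h (m : 'I_k -> nat) :
  ple f h -> (forall i, 0 < m i -> in_image h i.+1) ->
  exists g, [/\ ple f g, ple g h &
    forall i : 'I_k, in_image g i.+1 = in_image f i.+1 || (0 < m i)].
Proof.
move=> le_fh m_image.
pose C c := in_image f c || [exists i : 'I_k, (c == i.+1) && (0 < m i)].
have C0 : C 0 by rewrite /C image0.
have C_image c : C c -> c <= k -> in_image h c.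
  case/orP => [imf _|/existsP [i /andP [/eqP -> /m_image //]]].
  exact: image_mono imf.
exists (rounded C0 C_image); split.
- apply/forallP => j; rewrite -[_ <= _]/(pval f j <= pval _ j) rounded_pval.
  by apply: round_down_ge; [apply/orP; left; apply/existsP; exists j | apply: ple_pval].
- exact: rounded_le.
- move=> i; rewrite rounded_image // /C; congr (_ || _).
  apply/existsP/idP => [[i' /andP [/eqP/succn_inj/val_inj -> //]]|pos].
  by exists i; rewrite eqxx.
Qed.

End Placings.

Section SigmaGraph.
Variable k : nat.
Implicit Types f g h : placing k.

Lemma heightE f i : height f i = in_image f i.+1.
Proof. by []. Qed.

Lemma height_mono f g i : ple f g -> height f i <= height g i.
Proof.
move=> le_fg; rewrite !heightE.
by case imf: (in_image f i.+1); rewrite // (image_mono le_fg imf).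
Qed.

(* The structure maps of Sigma_k on underlying pairs (the insertions are
   always legal by reflexivity, resp. for composable arrows by transitivity). *)
Lemma val_r (x : Sigma k) : val (sig_r x) = ((val x).1, (val x).1).
Proof. by rewrite /sig_r insubdK //; apply: ple_refl. Qed.

Lemma val_s (x : Sigma k) : val (sig_s x) = ((val x).2, (val x).2).
Proof. by rewrite /sig_s insubdK //; apply: ple_refl. Qed.

Lemma val_comp (x y : Sigma k) : ple (val x).1 (val y).2 ->
  val (sig_comp x y) = ((val x).1, (val y).2).
Proof. by move=> le_xy; rewrite /sig_comp insubdK. Qed.

Lemma composable_mid (x y : Sigma k) : sig_s x = sig_r y -> (val x).2 = (val y).1.
Proof. by move=> /(congr1 val); rewrite val_s val_r => -[]. Qed.

Lemma composable_le (x y : Sigma k) : sig_s x = sig_r y -> ple (val x).1 (val y).2.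
Proof.
by move/composable_mid => mid; apply: ple_trans (valP x) _; rewrite mid; apply: (valP y).
Qed.

Lemma sig_dE (x : Sigma k) i : sig_d x i = height (val x).2 i - height (val x).1 i.
Proof. by rewrite ffunE. Qed.

Lemma height_sub_add f g h i : ple f g -> ple g h ->
  height h i - height f i = (height g i - height f i) + (height h i - height g i).
Proof. by move=> /(height_mono i) le_fg /(height_mono i) le_gh; lia. Qed.

Lemma sigma_category :
  [/\ forall x : Sigma k, sig_r (sig_r x) = sig_r x /\ sig_s (sig_r x) = sig_r x,
      forall x : Sigma k, sig_r (sig_s x) = sig_s x /\ sig_s (sig_s x) = sig_s x,
      forall x y : Sigma k, sig_s x = sig_r y ->
        sig_r (sig_comp x y) = sig_r x /\ sig_s (sig_comp x y) = sig_s y,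
      forall x : Sigma k, sig_comp (sig_r x) x = x /\ sig_comp x (sig_s x) = x &
      forall x y z : Sigma k, sig_s x = sig_r y -> sig_s y = sig_r z ->
        sig_comp (sig_comp x y) z = sig_comp x (sig_comp y z)].
Proof.
split.
- by move=> x; split; apply: val_inj; rewrite !(val_r, val_s).
- by move=> x; split; apply: val_inj; rewrite !(val_r, val_s).
- by move=> x y /composable_le le_xy; split; apply: val_inj; rewrite ?val_r ?val_s val_comp.
- by move=> [[f g] le_fg]; split; apply: val_inj; rewrite val_comp ?val_r ?val_s.
move=> x y z xy yz; have le_xy := composable_le xy; have le_yz := composable_le yz.
have le_xz : ple (val x).1 (val z).2.
  by apply: ple_trans le_xy _; rewrite (composable_mid yz); apply: (valP z).
by apply: val_inj; rewrite !val_comp ?val_comp.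
Qed.

Lemma sigma_degree_functor :
  (forall x : Sigma k, sig_d (sig_r x) = zerov k) /\
  (forall x y : Sigma k, sig_s x = sig_r y ->
     sig_d (sig_comp x y) = Defs.addv (sig_d x) (sig_d y)).
Proof.
split; first by move=> x; apply/ffunP => i; rewrite !ffunE val_r subnn.
move=> x y xy; apply/ffunP => i; rewrite !ffunE val_comp ?composable_le //=.
rewrite (composable_mid xy); apply: height_sub_add (valP y).
by rewrite -(composable_mid xy); apply: (valP x).
Qed.

Lemma bit_sub_split (a b : bool) (m n : nat) : b - a = m + n ->
  (a || (0 < m)) - a = m /\ b - (a || (0 < m)) = n.
Proof. by case: a; case: b; case: m => [|m] /=; lia. Qed.

Lemma bit_of_sub (a b : bool) (m : nat) : a <= b -> b - a = m -> b = a || (0 < m).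
Proof. by case: a; case: b; case: m => [|m] /=; lia. Qed.

Lemma intermediate_unique f g1 g2 h :
  ple f g1 -> ple g1 h -> ple f g2 -> ple g2 h ->
  (forall i, height g1 i - height f i = height g2 i - height f i) -> g1 = g2.
Proof.
move=> le_f1 le_1h le_f2 le_2h same; apply: (placing_eq_of_image le_1h le_2h).
apply: image_ext => i.
have e1 : in_image g1 i.+1 = _ := bit_of_sub (height_mono i le_f1) (same i).
have e2 : in_image g2 i.+1 = _ := bit_of_sub (height_mono i le_f2) (erefl _).
by rewrite e1 e2.
Qed.

Lemma sigma_factorisation (m n : {ffun 'I_k -> nat}) (x : Sigma k) :
  sig_d x = Defs.addv m n ->
  exists! p : Sigma k * Sigma k,
    [/\ sig_s p.1 = sig_r p.2, sig_d p.1 = m, sig_d p.2 = n & sig_comp p.1 p.2 = x].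
Proof.
move=> dx; have le_x : ple (val x).1 (val x).2 := valP x.
have dxi i : height (val x).2 i - height (val x).1 i = m i + n i.
  by rewrite -sig_dE dx ffunE.
have m_image i : 0 < m i -> in_image (val x).2 i.+1.
  by move: (dxi i); rewrite !heightE; case: (in_image _ _) => //=; lia.
have [g [le_fg le_gh img]] := factor_placing le_x m_image.
exists ((exist _ ((val x).1, g) le_fg : Sigma k), (exist _ (g, (val x).2) le_gh : Sigma k)).
split.
  split; first by apply: val_inj; rewrite val_s val_r.
  - apply/ffunP => i; rewrite sig_dE /= [height g i]heightE img.
    by case: (bit_sub_split (dxi i)).
  - apply/ffunP => i; rewrite sig_dE /= [height g i]heightE img.
    by case: (bit_sub_split (dxi i)).
  by apply: val_inj; rewrite val_comp //=; case: (val x).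
move=> [[[a b] le_ab] [[b' c] le_bc]] [/composable_mid /= eb dy _ yzx]; subst b'.
have /(congr1 val) := yzx; rewrite val_comp /=; last exact: ple_trans le_ab le_bc.
move=> ex; have ea : a = (val x).1 by rewrite -[RHS]/(sval x).1 -ex.
have ec : c = (val x).2 by rewrite -[RHS]/(sval x).2 -ex.
subst a c; have eg : b = g.
  apply: (intermediate_unique le_ab le_bc le_fg le_gh) => i.
  have := congr1 (fun d : {ffun _ -> _} => d i) dy; rewrite sig_dE /= => ->.
  by case: (bit_sub_split (dxi i)) => <- _; rewrite [height g i]heightE img.
by subst b; congr pair; apply: val_inj.
Qed.

Lemma sigma_kgraph : is_kgraph (@sig_r k) (@sig_s k) (@sig_comp k) (@sig_d k).
Proof.
have [r_id s_id comp_ends unit assoc] := sigma_category.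
have [d_id d_comp] := sigma_degree_functor.
by do !split => //; apply: sigma_factorisation.
Qed.

End SigmaGraph.

Section DegreeRange.
Variable k : nat.

Lemma const_placing_spec : is_placing ([ffun => ord0] : {ffun 'I_k.+1 -> 'I_k.+1}).
Proof.
by apply/forallP => j; rewrite ffunE eq_sym; apply/eqP/eq_card0 => i; rewrite inE ffunE.
Qed.

Definition const_placing : placing k := exist (@is_placing k) _ const_placing_spec.

Lemma id_placing_spec : is_placing ([ffun j => j] : {ffun 'I_k.+1 -> 'I_k.+1}).
Proof.
apply/forallP => j; rewrite ffunE -{1}(card_lt_ord j).
by apply/eqP/eq_card => i; rewrite !inE ffunE.
Qed.

Definition id_placing : placing k := exist (@is_placing k) _ id_placing_spec.

Lemma const_le_id : ple const_placing id_placing.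
Proof. by apply/forallP => i; rewrite /= ffunE. Qed.

Definition full_arrow : Sigma k := exist _ (const_placing, id_placing) const_le_id.

Lemma full_arrow_degree i : sig_d full_arrow i = 1.
Proof.
rewrite sig_dE /=; have -> : height const_placing i = 0.
  by rewrite heightE; case: (boolP (in_image _ _)) => // /existsP [j]; rewrite /pval /= ffunE.
have -> // : height id_placing i = 1.
by apply/eqP; rewrite eqb1; apply/existsP; exists (lift ord0 i); rewrite /pval /= ffunE.
Qed.

(* Degrees are differences of 0/1 vectors along <=, hence nonnegative. *)
Lemma sig_dZ_ge0 (x : Sigma k) i : (0 <= sig_dZ x i)%R.
Proof. by rewrite /sig_dZ Num.Theory.subr_ge0 lez_nat height_mono //; apply: (valP x). Qed.

(* The degrees are exactly the vectors n <= 1_k: factor the full arrow. *)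
Lemma sig_d_range (n : {ffun 'I_k -> nat}) :
  (forall i, n i <= 1) <-> exists x : Sigma k, sig_d x = n.
Proof.
split=> [n_le1|[x <-] i]; last by rewrite sig_dE; apply: leq_trans (leq_subr _ _) (leq_b1 _).
have split_full : sig_d full_arrow = Defs.addv n [ffun i => 1 - n i].
  by apply/ffunP => i; rewrite !ffunE -sig_dE full_arrow_degree subnKC.
have [[y z] [[_ dy _ _] _]] := sigma_factorisation split_full.
by exists y.
Qed.

End DegreeRange.

Theorem proposition5p4 (k : nat) (hk : (1 <= k)%N) :
  [/\ (forall (x : Sigma k) (i : 'I_k), (0 <= sig_dZ x i)%R),
      is_kgraph (@sig_r k) (@sig_s k) (@sig_comp k) (@sig_d k) &
      (forall n : {ffun 'I_k -> nat},
         (forall i, (n i <= 1)%N) <-> exists x : Sigma k, sig_d x = n)].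
Proof.
split; [exact: sig_dZ_ge0 | exact: sigma_kgraph | exact: sig_d_range].
Qed.
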